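(* Fix the signal accuracy $\phi\in(\tfrac12,1]$, a type distribution $F$ satisfying the assumptions below, and designer preferences $(A_1,A_0,B_1,B_0)\in\mathbb{R}_+^4$. Then, as the reward $r\to\infty$, the designer can attain an expected payoff arbitrarily close to $\max\{A_1,A_0,B_1,B_0\}$: for every $\varepsilon>0$ there exists $R$ such that for every $r>R$ there is a classifier $\delta\in[0,1]^2$ with $EU_D(\delta\mid r)\ge \max\{A_1,A_0,B_1,B_0\}-\varepsilon$.
   Context: A unit mass of individuals $i\in[0,1]$ each privately knows a cost $\gamma_i\in\mathbb{R}$ of choosing behavior $\beta_i=1$ (compliance) rather than $\beta_i=0$. Costs are distributed in the population according to a continuously differentiable CDF $F$ whose density $f$ is log-concave with full support on $\mathbb{R}$. A designer chooses a classifier $\delta=(\delta_1,\delta_0)\in[0,1]^2$. Each individual's behavior generates a signal $s_i\in\{0,1\}$ with $\Pr[s_i=\beta_i]=\phi$, and the classifier assigns a decision $d_i\in\{0,1\}$ with $\Pr[d_i=s_i\mid s_i]=\delta_{s_i}$. An individual with $d_i=1$ receives reward $r\in\mathbb{R}$ and incurs cost $\gamma_i$ if $\beta_i=1$. Let $\rho(\delta,\phi)=(\delta_1+\delta_0-1)(2\phi-1)$. Given $(\delta,r)$, individual $i$ chooses $\beta_i=1$ iff $\gamma_i\le r\rho(\delta,\phi)$, so the prevalence of compliance is $\pi=\pi_F(\delta,\phi,r)=F(r\rho(\delta,\phi))$. The designer receives $A_1$ from a complier with $d_i=1$, $A_0$ from a complier with $d_i=0$, $B_1$ from a non-complier with $d_i=0$,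 and $B_0$ from a non-complier with $d_i=1$; the designer's expected payoff is $EU_D(\delta\mid r)=\pi\big[\phi(A_1\delta_1+A_0(1-\delta_1))+(1-\phi)(A_0\delta_0+A_1(1-\delta_0))\big]+(1-\pi)\big[\phi(B_1\delta_0+B_0(1-\delta_0))+(1-\phi)(B_0\delta_1+B_1(1-\delta_1))\big]$. *)

From Stdlib Require Import Reals Lra.
From Coquelicot Require Import Coquelicot.
Open Scope R_scope.

Definition rho (d1 d0 phi : R) : R := (d1 + d0 - 1) * (2 * phi - 1).

Definition prevalence (F : R -> R) (d1 d0 phi r : R) : R := F (r * rho d1 d0 phi).

Definition EU_D (F : R -> R) (phi A1 A0 B1 B0 r d1 d0 : R) : R :=
  let p := prevalence F d1 d0 phi r in
  p * (phi * (A1 * d1 + A0 * (1 - d1)) + (1 - phi) * (A0 * d0 + A1 * (1 - d0)))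
  + (1 - p) * (phi * (B1 * d0 + B0 * (1 - d0)) + (1 - phi) * (B0 * d1 + B1 * (1 - d1))).

(* f is log-concave: ln f is concave (f is positive everywhere here) *)
Definition log_concave (f : R -> R) : Prop :=
  forall x y t, 0 <= t <= 1 ->
    t * ln (f x) + (1 - t) * ln (f y) <= ln (f (t * x + (1 - t) * y)).

Definition admissible_cdf (F f : R -> R) : Prop :=
  (forall x, is_derive F x (f x)) /\
  (forall x, continuous f x) /\
  (forall x, 0 < f x) /\
  log_concave f /\
  is_lim F m_infty 0 /\
  is_lim F p_infty 1.

(* A classifier that deviates
   slightly from a "pure" one, e.g. (1, eta) instead of (1, 0), gives
   compliance a small but positive premium rho; as r grows, r * rho -> +oo, so
   almost everybody complies and the designer's payoff tends to the complier
   payoff of that classifier, which is within eta * A1 of A1.  Symmetrically,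
   a negative premium drives compliance to 0 and the payoff towards B1 or B0. *)
From Stdlib Require Import Reals Lra.
From Coquelicot Require Import Coquelicot.
Open Scope R_scope.

Definition complier_payoff (phi A1 A0 d1 d0 : R) : R :=
  phi * (A1 * d1 + A0 * (1 - d1)) + (1 - phi) * (A0 * d0 + A1 * (1 - d0)).

Definition noncomplier_payoff (phi B1 B0 d1 d0 : R) : R :=
  phi * (B1 * d0 + B0 * (1 - d0)) + (1 - phi) * (B0 * d1 + B1 * (1 - d1)).

Lemma is_lim_comp_scal_pos (g : R -> R) (c l : R) :
  0 < c -> is_lim g p_infty l -> is_lim (fun r => g (r * c)) p_infty l.
Proof.
  intros Hc Hg.
  apply (is_lim_ext (fun r => g (c * r + 0))); [intros r; f_equal; ring|].
  apply is_lim_comp_lin; [|lra].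
  replace (Rbar_plus (Rbar_mult c p_infty) 0) with p_infty; [exact Hg|].
  rewrite Rbar_mult_comm, (is_Rbar_mult_unique p_infty c p_infty); [easy|].
  now apply is_Rbar_mult_p_infty_pos.
Qed.

Lemma is_lim_comp_scal_neg (g : R -> R) (c l : R) :
  c < 0 -> is_lim g m_infty l -> is_lim (fun r => g (r * c)) p_infty l.
Proof.
  intros Hc Hg.
  apply (is_lim_ext (fun r => g (c * r + 0))); [intros r; f_equal; ring|].
  apply is_lim_comp_lin; [|lra].
  replace (Rbar_plus (Rbar_mult c p_infty) 0) with m_infty; [exact Hg|].
  rewrite Rbar_mult_comm, (is_Rbar_mult_unique p_infty c m_infty); [easy|].
  now apply is_Rbar_mult_p_infty_neg.
Qed.

Lemma eventually_ge_of_is_lim (g : R -> R) (L e : R) :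
  is_lim g p_infty L -> 0 < e -> exists Rb, forall r, Rb < r -> g r >= L - e.
Proof.
  intros Hg He.
  destruct (proj2 (is_lim_spec g p_infty L) Hg (mkposreal e He)) as [Rb HRb].
  exists Rb; intros r Hr.
  specialize (HRb r Hr); apply Rabs_def2 in HRb; simpl in HRb; lra.
Qed.

Lemma small_weight (T e : R) :
  0 <= T -> 0 < e -> exists eta, 0 < eta <= 1 /\ eta * T <= e.
Proof.
  intros HT He.
  assert (Hpos : 0 < e / (T + e)) by (apply Rdiv_lt_0_compat; lra).
  assert (Hscale : e / (T + e) * (T + e) = e) by (field; lra).
  exists (e / (T + e)); repeat split; nra.
Qed.

Section AsymptoticPayoff.

Variables (phi : R) (F : R -> R) (A1 A0 B1 B0 : R).

Lemma is_lim_EU_D (d1 d0 : R) (q : R) :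
  is_lim (fun r => prevalence F d1 d0 phi r) p_infty q ->
  is_lim (fun r => EU_D F phi A1 A0 B1 B0 r d1 d0) p_infty
    (q * complier_payoff phi A1 A0 d1 d0
     + (1 - q) * noncomplier_payoff phi B1 B0 d1 d0).
Proof.
  intros Hq.
  set (mix := fun p => p * complier_payoff phi A1 A0 d1 d0
                       + (1 - p) * noncomplier_payoff phi B1 B0 d1 d0).
  assert (Hmix : continuous mix q).
  { apply (ex_derive_continuous (V := R_NormedModule)); unfold mix.
    auto_derive; trivial. }
  exact (is_lim_comp_continuous _ mix _ _ Hq Hmix).
Qed.

Hypothesis F_lim_p_infty : is_lim F p_infty 1.
Hypothesis F_lim_m_infty : is_lim F m_infty 0.

Lemma is_lim_EU_D_complier (d1 d0 : R) :
  0 < rho d1 d0 phi ->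
  is_lim (fun r => EU_D F phi A1 A0 B1 B0 r d1 d0) p_infty
    (complier_payoff phi A1 A0 d1 d0).
Proof.
  intros Hrho.
  replace (complier_payoff phi A1 A0 d1 d0) with
    (1 * complier_payoff phi A1 A0 d1 d0
     + (1 - 1) * noncomplier_payoff phi B1 B0 d1 d0) by ring.
  now apply is_lim_EU_D, is_lim_comp_scal_pos.
Qed.

Lemma is_lim_EU_D_noncomplier (d1 d0 : R) :
  rho d1 d0 phi < 0 ->
  is_lim (fun r => EU_D F phi A1 A0 B1 B0 r d1 d0) p_infty
    (noncomplier_payoff phi B1 B0 d1 d0).
Proof.
  intros Hrho.
  replace (noncomplier_payoff phi B1 B0 d1 d0) with
    (0 * complier_payoff phi A1 A0 d1 d0
     + (1 - 0) * noncomplier_payoff phi B1 B0 d1 d0) by ring.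
  now apply is_lim_EU_D, is_lim_comp_scal_neg.
Qed.

Definition asymptotic_payoff_ge (w : R) : Prop :=
  exists d1 d0 (L : R), 0 <= d1 <= 1 /\ 0 <= d0 <= 1 /\
    is_lim (fun r => EU_D F phi A1 A0 B1 B0 r d1 d0) p_infty L /\ w <= L.

Definition asymptotically_attainable (v : R) : Prop :=
  forall e, 0 < e -> asymptotic_payoff_ge (v - e).

Lemma attainable_of_perturbations (v : R) :
  0 <= v -> (forall eta, 0 < eta <= 1 -> asymptotic_payoff_ge (v - eta * v)) ->
  asymptotically_attainable v.
Proof.
  intros Hv Hpert e He.
  destruct (small_weight v e Hv He) as [eta [Heta Hsmall]].
  destruct (Hpert eta Heta) as [d1 [d0 [L [Hd1 [Hd0 [HL Hle]]]]]].
  exists d1, d0, L; repeat split; auto; lra.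
Qed.

Hypothesis phi_range : 1 / 2 < phi <= 1.
Hypotheses (A1_ge0 : 0 <= A1) (A0_ge0 : 0 <= A0)
           (B1_ge0 : 0 <= B1) (B0_ge0 : 0 <= B0).

Lemma attainable_A1 : asymptotically_attainable A1.
Proof.
  apply attainable_of_perturbations; auto; intros eta Heta.
  exists 1, eta, (complier_payoff phi A1 A0 1 eta); repeat split; try lra.
  - apply is_lim_EU_D_complier; unfold rho; nra.
  - assert (0 <= (1 - phi) * eta * A0) by (repeat apply Rmult_le_pos; lra).
    assert (0 <= phi * eta * A1) by (repeat apply Rmult_le_pos; lra).
    unfold complier_payoff; lra.
Qed.

Lemma attainable_A0 : asymptotically_attainable A0.
Proof.
  apply attainable_of_perturbations; auto; intros eta Heta.
  exists eta, 1, (complier_payoff phi A1 A0 eta 1); repeat split; try lra.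
  - apply is_lim_EU_D_complier; unfold rho; nra.
  - assert (0 <= phi * eta * A1) by (repeat apply Rmult_le_pos; lra).
    assert (0 <= (1 - phi) * eta * A0) by (repeat apply Rmult_le_pos; lra).
    unfold complier_payoff; lra.
Qed.

Lemma attainable_B1 : asymptotically_attainable B1.
Proof.
  apply attainable_of_perturbations; auto; intros eta Heta.
  exists 0, (1 - eta), (noncomplier_payoff phi B1 B0 0 (1 - eta));
    repeat split; try lra.
  - apply is_lim_EU_D_noncomplier; unfold rho; nra.
  - assert (0 <= phi * eta * B0) by (repeat apply Rmult_le_pos; lra).
    assert (0 <= (1 - phi) * eta * B1) by (repeat apply Rmult_le_pos; lra).
    unfold noncomplier_payoff; lra.
Qed.

Lemma attainable_B0 : asymptotically_attainable B0.
Proof.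
  apply attainable_of_perturbations; auto; intros eta Heta.
  exists (1 - eta), 0, (noncomplier_payoff phi B1 B0 (1 - eta) 0);
    repeat split; try lra.
  - apply is_lim_EU_D_noncomplier; unfold rho; nra.
  - assert (0 <= (1 - phi) * eta * B1) by (repeat apply Rmult_le_pos; lra).
    assert (0 <= phi * eta * B0) by (repeat apply Rmult_le_pos; lra).
    unfold noncomplier_payoff; lra.
Qed.

End AsymptoticPayoff.

Theorem proposition1 (phi : R) (F f : R -> R) (A1 A0 B1 B0 : R) :
  1 / 2 < phi <= 1 ->
  admissible_cdf F f ->
  0 <= A1 -> 0 <= A0 -> 0 <= B1 -> 0 <= B0 ->
  forall eps : R, 0 < eps ->
  exists Rb : R, forall r : R, Rb < r ->
    exists d1 d0 : R, 0 <= d1 <= 1 /\ 0 <= d0 <= 1 /\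
      EU_D F phi A1 A0 B1 B0 r d1 d0 >= Rmax (Rmax A1 A0) (Rmax B1 B0) - eps.
Proof.
  intros Hphi [_ [_ [_ [_ [Hm Hp]]]]] HA1 HA0 HB1 HB0 eps Heps.
  assert (Hmax : asymptotically_attainable phi F A1 A0 B1 B0
                   (Rmax (Rmax A1 A0) (Rmax B1 B0))).
  { repeat apply Rmax_case;
      auto using attainable_A1, attainable_A0, attainable_B1, attainable_B0. }
  destruct (Hmax (eps / 2)) as [d1 [d0 [L [Hd1 [Hd0 [HL Hle]]]]]]; [lra|].
  destruct (eventually_ge_of_is_lim _ L (eps / 2) HL) as [Rb HRb]; [lra|].
  exists Rb; intros r Hr; exists d1, d0; repeat split; try lra.
  specialize (HRb r Hr); lra.
Qed.
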